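(* Let $G$ be a directed $st$-graph, let $T\neq\{s\}$ be a minimal vertex separator of $G$ and let $b\in T$. Then $T$ is $b$-minimal if and only if $(T\cup\mathrm{pred}(u))\setminus\{b\}\preceq b$ for every $u\in T$.
   Context: A directed $st$-graph $G=(V,E,s,t)$ is a finite directed graph with no self-loops and no parallel edges, with distinct source $s$ (no incoming edges) and sink $t$ (no outgoing edges), such that every vertex lies on some directed walk from $s$ to $t$. A vertex separator is a set $T\subseteq V$ meeting every $s$–$t$ walk; an mvs is an inclusion-minimal one. $\mathrm{pred}(u)=\{v\in V: (v,u)\in E\}$. For $A\subseteq V$, $u\in V$: $A\preceq u$ if every directed walk from $s$ to $u$ contains a vertex of $A$; $u\sqsubseteq A$ if every directed walk from $u$ to $t$ contains a vertex of $A$; $A\sqsubseteq A'$ if $u\sqsubseteq A'$ for all $u\in A$; $A\sqsubset A'$ means $A\sqsubseteq A'$, $A\ne A'$. An mvs $T$ is $b$-minimal if $b\in T$ and $b\notin T'$ for every mvs $T'\sqsubset T$. *)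

(* A directed st-graph on a finite vertex type V with edge
   relation E (a relation has no parallel edges by construction). *)
From mathcomp Require Import all_boot.
Set Implicit Arguments. Unset Strict Implicit. Unset Printing Implicit Defensive.

Section StGraph.
Variable V : finType.
Variable E : rel V.

(* A directed walk from x to y: vertex sequence x :: p, consecutive vertices
   joined by edges, ending at y.  Its vertex set is x :: p. *)
Definition walk (x y : V) (p : seq V) : bool := path E x p && (last x p == y).

Definition walk_meets (A : {set V}) (x : V) (p : seq V) : bool :=
  has (fun v => v \in A) (x :: p).

Definition st_graph (s t : V) : Prop :=
  [/\ s != t,
      (forall v, ~~ E v v),
      (forall v, ~~ E v s),
      (forall v, ~~ E t v) &
      (forall u, exists p q, walk s u p /\ walk u t q)].

Definition vsep (s t : V) (T : {set V}) : Prop :=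
  forall p, walk s t p -> walk_meets T s p.

Definition mvs (s t : V) (T : {set V}) : Prop :=
  vsep s t T /\ (forall T' : {set V}, T' \subset T -> vsep s t T' -> T' = T).

Definition predv (u : V) : {set V} := [set v | E v u].

Definition prec (s : V) (A : {set V}) (u : V) : Prop :=
  forall p, walk s u p -> walk_meets A s p.

Definition sqle_v (t : V) (u : V) (A : {set V}) : Prop :=
  forall p, walk u t p -> walk_meets A u p.

Definition sqle (t : V) (A A' : {set V}) : Prop :=
  forall u, u \in A -> sqle_v t u A'.

Definition sqlt (t : V) (A A' : {set V}) : Prop := sqle t A A' /\ A <> A'.

Definition b_minimal (s t : V) (T : {set V}) (b : V) : Prop :=
  b \in T /\
  (forall T' : {set V}, mvs s t T' -> sqlt t T' T -> b \notin T').

End StGraph.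

From mathcomp Require Import all_boot.
From mathcomp Require Import boolp.

Set Implicit Arguments. Unset Strict Implicit. Unset Printing Implicit Defensive.

(* Key fact: if T is an mvs and T' is a separator with T' ⊑ T, then T' ⪯ x
   for every x in T.  Indeed x has a walk to t meeting T only at x; prefixing
   it by a walk from s to x avoiding T' yields an s-t walk whose vertices in T'
   come strictly after x, and such a vertex, being ⊑ T, forces a later vertex
   of T.
   (=>) If a walk reaches b avoiding (T ∪ pred u) \ b, replacing u in T by its
   predecessors that are ⊑ T still gives a separator.  An mvs T' inside it
   misses u, so T' ⊏ T, and by the key fact T' meets the walk, hence at b.
   (<=) If T' ⊏ T contains b, take a walk from s to b meeting T' only at b and
   some u in T \ T'.  The hypothesis puts before b on that walk a vertex w in
   T or in pred(u), so w or u is reached avoiding T', against the key fact. *)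

Section Walks.
Variables (V : finType) (E : rel V).

Lemma walk_cat x y z p q : walk E x y p -> walk E y z q -> walk E x z (p ++ q).
Proof.
rewrite /walk => /andP[pxp /eqP lxp] /andP[pyq lyq].
by rewrite cat_path last_cat lxp pxp pyq lyq.
Qed.

Lemma walk_rcons x y z p : walk E x y p -> E y z -> walk E x z (rcons p z).
Proof.
by move=> wp yz; rewrite -cats1; apply: (walk_cat wp); rewrite /walk /= yz eqxx.
Qed.

Lemma walk_split x z p s1 y s2 : walk E x z p -> x :: p = s1 ++ y :: s2 ->
  (exists2 q, walk E x y q & belast x q = s1) /\ walk E y z s2.
Proof.
case: s1 => [|a s1] wp [<- ep]; subst p.
  by split=> //; exists [::]; rewrite /walk /= ?eqxx.
move: wp; rewrite /walk cat_path last_cat /= => /andP[/andP[ps1 /andP[ey ps2] ls2]].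
split; last by rewrite ps2.
by exists (rcons s1 y); rewrite ?belast_rcons // rcons_path ps1 ey last_rcons /=.
Qed.

Lemma walk_meetsE (A : {set V}) x y p : walk E x y p ->
  walk_meets A x p = (y \in A) || has (mem A) (belast x p).
Proof. by case/andP=> _ /eqP lp; rewrite /walk_meets lastI has_rcons lp. Qed.

Lemma walk_meets_cat (A : {set V}) x p q :
  walk_meets A x (p ++ q) = walk_meets A x p || has (mem A) q.
Proof. by rewrite /walk_meets -cat_cons has_cat. Qed.

Lemma walk_meetsS (A B : {set V}) x p :
  A \subset B -> walk_meets A x p -> walk_meets B x p.
Proof. by move/subsetP=> sAB; apply: sub_has => v /sAB. Qed.

Lemma walk_to_inner x z p y : walk E x z p -> y \in belast x p ->
  exists2 q, walk E x y q & {subset belast x q <= belast x p}.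
Proof.
move=> wp /splitPr eq_bp; case: eq_bp wp (lastI x p) => s1 s2 wp eq_p.
rewrite rcons_cat /= in eq_p; have [[q wq <-] _] := walk_split wp eq_p.
by exists q => // v; rewrite mem_cat => ->.
Qed.

End Walks.

Section Separators.
Variables (V : finType) (E : rel V) (s t : V).

Lemma mvs_sub_vsep (S : {set V}) : vsep E s t S ->
  exists2 T, mvs E s t T & T \subset S.
Proof.
move=> sepS; have [T /minsetP[/asboolP sepT minT] sTS] :=
  minset_exists (P := fun A => `[< vsep E s t A >]) (asboolT sepS).
by exists T => //; split=> // B sBT sepB; apply: minT => //; apply/asboolP.
Qed.

Lemma mvs_private_walk T v : mvs E s t T -> v \in T ->
  exists2 p, walk E s t p & ~~ walk_meets (T :\ v) s p.
Proof.
move=> [_ minT] vT; apply: contrapT => noWalk.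
suff: T :\ v = T by move/setP/(_ v); rewrite !inE eqxx vT.
apply: minT; first exact: subsetDl.
by move=> p wp; apply: contrapT => avoid; apply: noWalk; exists p => //; apply/negP.
Qed.

Lemma mvs_entry_walk T v : mvs E s t T -> v \in T ->
  exists2 p, walk E s v p & ~~ has (mem T) (belast s p).
Proof.
move=> mT vT; have [p wp avoid] := mvs_private_walk mT vT.
case: {1}(s :: p) _ _ / (split_find (mT.1 p wp)) (erefl (s :: p)).
move=> x s1 s2 xT nTs1.
rewrite cat_rcons => /esym eq_p; have [[q wq bq] _] := walk_split wp eq_p.
suff xv : x = v by exists q; rewrite -?xv ?bq.
apply: contraNeq avoid => xNv; apply/hasP; exists x; last by rewrite !inE xNv.
by rewrite eq_p mem_cat mem_head orbT.
Qed.

Lemma mvs_exit_walk T v : mvs E s t T -> v \in T ->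
  exists2 q, walk E v t q & ~~ has (mem T) q.
Proof.
move=> mT vT; have [p wp avoid] := mvs_private_walk mT vT.
have := mT.1 p wp; rewrite /walk_meets -has_rev => hasT.
case: {1}(rev (s :: p)) _ _ / (split_find hasT) (erefl (rev (s :: p))).
move=> x r1 r2 xT nTr1.
move/esym/(congr1 rev); rewrite revK rev_cat rev_rcons /= => eq_p.
have [_ wq] := walk_split wp eq_p.
suff xv : x = v by exists (rev r1); rewrite -?xv ?has_rev.
apply: contraNeq avoid => xNv; apply/hasP; exists x; last by rewrite !inE xNv.
by rewrite eq_p mem_cat mem_head orbT.
Qed.

Lemma sqleSl (A B C : {set V}) :
  A \subset B -> sqle E t B C -> sqle E t A C.
Proof. by move=> sAB leBC x /(subsetP sAB); apply: leBC. Qed.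

Lemma vsep_sqle_v T x p : vsep E s t T -> walk E s x p -> ~~ walk_meets T s p ->
  sqle_v E t x T.
Proof.
move=> sepT wp /negbTE avoid q wq; have := sepT _ (walk_cat wp wq).
by rewrite walk_meets_cat avoid /= /walk_meets /= => ->; rewrite orbT.
Qed.

Lemma sqle_prec T T' x :
  vsep E s t T' -> sqle E t T' T -> mvs E s t T -> x \in T -> prec E s T' x.
Proof.
move=> sepT' leT' mT xT p wp; apply: contraT => /negbTE avoid.
have [q wq nTq] := mvs_exit_walk mT xT.
have := sepT' _ (walk_cat wp wq).
rewrite walk_meets_cat avoid /= => /hasP[y yq yT'].
case/splitPr: yq wq nTq => q1 q2 wq.
have [_ wy] := walk_split wq (erefl ((x :: q1) ++ y :: q2)).
by rewrite has_cat (leT' y yT' q2 wy : has _ (y :: q2)) orbT.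
Qed.

Definition pred_exchange (T : {set V}) (u : V) : {set V} :=
  (T :\ u) :|: [set x in predv E u | `[< sqle_v E t x T >]].

Lemma sqle_pred_exchange T u : sqle E t (pred_exchange T u) T.
Proof.
move=> x; rewrite !inE => /orP[/andP[_ xT] q _ | /andP[_ /asboolP]] //.
by rewrite /walk_meets /= xT.
Qed.

Lemma vsep_pred_exchange T u :
  vsep E s t T -> u != s -> vsep E s t (pred_exchange T u).
Proof.
move=> sepT uNs q wq; have := sepT q wq; rewrite /walk_meets => hasT.
case: {1}(s :: q) _ _ / (split_find hasT) (erefl (s :: q)).
move=> z s1 s2 zT nTs1 /esym eq_q.
apply/hasP; case: (eqVneq z u) uNs => [<- zNs | zNu _]; last first.
  exists z; first by rewrite eq_q mem_cat mem_rcons mem_head.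
  by rewrite /pred_exchange !inE zNu zT.
case/lastP: s1 nTs1 eq_q => [|s1 x] nTs1 eq_q.
  by move: eq_q zNs => /= [-> _]; rewrite eqxx.
rewrite !cat_rcons in eq_q; have [[p wp bp] wx] := walk_split wq eq_q.
exists x; first by rewrite eq_q mem_cat mem_head orbT.
move: wx; rewrite /walk /= => /andP[/andP[xz _] _].
rewrite /pred_exchange !inE xz; apply/orP; right; apply/asboolP.
apply: (vsep_sqle_v sepT wp).
by move: nTs1; rewrite (walk_meetsE _ wp) bp has_rcons.
Qed.

Lemma pred_exchange_sub T u : pred_exchange T u \subset T :|: predv E u.
Proof.
by apply/subsetP => x; rewrite !inE => /orP[/andP[_ ->] | /andP[->]]; rewrite ?orbT.
Qed.

Lemma mvs_source T : mvs E s t T -> s \in T -> T = [set s].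
Proof.
move=> [_ minT] sT; apply/esym/minT; first by rewrite sub1set.
by move=> p _; rewrite /walk_meets /= inE eqxx.
Qed.

Lemma b_minimal_prec T b u :
  (forall v, ~~ E v v) -> mvs E s t T -> s \notin T -> b_minimal E s t T b ->
  u \in T -> prec E s ((T :|: predv E u) :\ b) b.
Proof.
move=> loopfree mT sT [bT bmin] uT p wp; apply: contraT => avoid.
have uNs : u != s by apply: contraNneq sT => <-.
have [T' mT' T'S] := mvs_sub_vsep (vsep_pred_exchange mT.1 uNs).
have leT' : sqle E t T' T := sqleSl T'S (@sqle_pred_exchange T u).
have uT' : u \notin T'.
  apply: contra (subsetP T'S u) _.
  by rewrite /pred_exchange !inE eqxx /= (negbTE (loopfree u)).
have bT' : b \notin T'.
  by apply: bmin => //; split=> // eqT; rewrite eqT uT in uT'.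
have T'Tu : T' \subset (T :|: predv E u) :\ b.
  by rewrite subsetD1 bT' (subset_trans T'S (@pred_exchange_sub T u)).
by rewrite -(negbTE avoid) (walk_meetsS T'Tu (sqle_prec mT'.1 leT' mT bT wp)).
Qed.

Lemma prec_b_minimal T b : mvs E s t T -> b \in T ->
  (forall u, u \in T -> prec E s ((T :|: predv E u) :\ b) b) ->
  b_minimal E s t T b.
Proof.
move=> mT bT precT; split=> // T' mT' [leT' neT']; apply/negP => bT'.
have [u uT uT'] : exists2 u, u \in T & u \notin T'.
  by apply/subsetPn/negP => sTT'; apply/neT'/esym/(mT'.2 T sTT' mT.1).
have [p wp avoid] := mvs_entry_walk mT' bT'.
have := precT u uT p wp; rewrite (walk_meetsE _ wp) !inE eqxx /= => /hasP[w wp_w].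
rewrite !inE => /andP[wNb wTu].
have [q wq sub_q] := walk_to_inner wp wp_w.
have avoid_q : ~~ has (mem T') (belast s q).
  by apply/hasPn => v /sub_q; apply: (hasPn avoid).
have wT' : w \notin T' := hasPn avoid w wp_w.
have meetsT' := sqle_prec mT'.1 leT' mT.
case/orP: wTu => [wT | wu].
  have := meetsT' w wT q wq.
  by rewrite (walk_meetsE _ wq) (negbTE wT') (negbTE avoid_q).
have wuq := walk_rcons wq wu.
have := meetsT' u uT _ wuq; rewrite (walk_meetsE _ wuq) belast_rcons (negbTE uT').
rewrite -[has _ (s :: q)]/(walk_meets T' s q) (walk_meetsE _ wq).
by rewrite (negbTE wT') (negbTE avoid_q).
Qed.

End Separators.

Theorem theorem4 (V : finType) (E : rel V) (s t : V)
  (hG : st_graph E s t) (T : {set V}) (hT : mvs E s t T)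
  (hTs : T <> [set s]) (b : V) (hb : b \in T) :
  b_minimal E s t T b <->
  (forall u, u \in T -> prec E s ((T :|: predv E u) :\ b) b).
Proof.
have sT : s \notin T by apply/negP => /(mvs_source hT).
have [_ loopfree _ _ _] := hG.
split=> [bmin u uT | ]; first exact: b_minimal_prec loopfree hT sT bmin uT.
exact: prec_b_minimal.
Qed.
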